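(* For all integers $m,n\geq 2$, the grid $P_m\Box P_n$ has an independent $[1,2]$-set.
   Context: $P_k$ denotes the path on $k$ vertices and $P_m\Box P_n$ the Cartesian product of two paths (the $m\times n$ grid graph). A set $S$ of vertices of a graph $G$ is independent if no two vertices of $S$ are adjacent, and dominating if every vertex not in $S$ has at least one neighbor in $S$. An independent $[1,2]$-set of $G$ is an independent dominating set $S$ such that every vertex $v\in V(G)\setminus S$ has at least one and at most two neighbors in $S$. *)

From mathcomp Require Import all_boot.
Set Implicit Arguments. Unset Strict Implicit. Unset Printing Implicit Defensive.

Definition nbrs_in (T : finType) (adj : rel T) (S : {set T}) (v : T) : {set T} :=
  [set u in S | adj v u].

Definition independent (T : finType) (adj : rel T) (S : {set T}) : Prop :=
  forall u v, u \in S -> v \in S -> ~~ adj u v.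

Definition dominating (T : finType) (adj : rel T) (S : {set T}) : Prop :=
  forall v, v \notin S -> exists2 u, u \in S & adj v u.

Definition independent_12_set (T : finType) (adj : rel T) (S : {set T}) : Prop :=
  [/\ independent adj S, dominating adj S &
      forall v, v \notin S -> 1 <= #|nbrs_in adj S v| <= 2].

Definition path_adj (k : nat) : rel 'I_k :=
  fun i j => (i.+1 == j :> nat) || (j.+1 == i :> nat).

Definition grid_adj (m n : nat) : rel ('I_m * 'I_n) :=
  fun x y =>
    ((x.1 == y.1) && path_adj x.2 y.2) || ((x.2 == y.2) && path_adj x.1 y.1).

From mathcomp Require Import all_boot.
From mathcomp Require Import zify.

Set Implicit Arguments. Unset Strict Implicit.

(* Take S to be the vertices whose coordinate sum i + j is congruent to c
   modulo 3.  Adjacent vertices have sums differing by exactly 1, so S is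
   independent, and a vertex outside S sees S only on one side (sum - 1 or
   sum + 1), where it has at most two neighbours.  A vertex with sum c + 1
   (resp. c + 2) has a neighbour with sum one less (resp. one more) unless it
   is the corner (0,0) (resp. (m-1,n-1)); choosing c in {0,1} with
   c <> m + n - 1 (mod 3) rules out both corners. *)

Section DiagonalClasses.

Variables m n : nat.

Definition diag_sum (x : 'I_m * 'I_n) : nat := x.1 + x.2.

Definition diag_class (c : nat) : {set 'I_m * 'I_n} :=
  [set x | diag_sum x %% 3 == c].

Lemma grid_adjE (u v : 'I_m * 'I_n) : grid_adj u v =
  (((u.1 : nat) == v.1) && ((u.2.+1 == v.2) || (v.2.+1 == u.2)))
  || (((u.2 : nat) == v.2) && ((u.1.+1 == v.1) || (v.1.+1 == u.1))).
Proof. by []. Qed.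

Lemma grid_adj_diag_sum (u v : 'I_m * 'I_n) : grid_adj u v ->
  (diag_sum u).+1 = diag_sum v \/ (diag_sum v).+1 = diag_sum u.
Proof.
rewrite grid_adjE /diag_sum.
by case/orP=> /andP[/eqP e /orP[]/eqP e']; lia.
Qed.

Lemma diag_class_independent c : independent (@grid_adj m n) (diag_class c).
Proof.
move=> u v; rewrite !inE => /eqP Su /eqP Sv; apply/negP.
by case/grid_adj_diag_sum; lia.
Qed.

Lemma card_nbrs_diag_class_le2 c (v : 'I_m * 'I_n) :
  #|nbrs_in (@grid_adj m n) (diag_class c) v| <= 2.
Proof.
rewrite -card_bool.
(* Two neighbours in the class have equal sums (as 2 is not 0 mod 3), so they
   coincide as soon as they lie on the same line through v. *)
apply: (@leq_card_in _ _ (fun u : 'I_m * 'I_n => (u.1 : nat) == v.1)).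
move=> [a b] [a' b']; rewrite !inE => /andP[/eqP S /= adj] /andP[/eqP S' /= adj'].
have same_sum : a + b = a' + b'.
  move: (grid_adj_diag_sum adj) (grid_adj_diag_sum adj') S S'.
  by rewrite /diag_sum /=; lia.
move: adj adj'; rewrite 2!grid_adjE /= => adj adj' E.
have [ea eb] : (a : nat) = a' /\ (b : nat) = b'.
  rewrite ![_ == nat_of_ord v.1]eq_sym in E.
  case: (boolP ((v.1 : nat) == a)) E => [/eqP ha /esym/eqP ha'|/negbTE ha ha'].
  - by split; lia.
  - move: adj adj'; rewrite ha -ha' /=.
    by case/andP=> /eqP hb _ /andP[/eqP hb' _]; split; lia.
by rewrite (val_inj ea) (val_inj eb).
Qed.

Lemma exists_pred_nbr (v : 'I_m * 'I_n) : 0 < diag_sum v ->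
  exists2 u, grid_adj v u & (diag_sum u).+1 = diag_sum v.
Proof.
case: v => i j; rewrite /diag_sum /= => pos.
have [i_pos|j_pos] : 0 < (i : nat) \/ 0 < (j : nat) by lia.
- exists (Ordinal (leq_ltn_trans (leq_pred i) (ltn_ord i)), j);
    rewrite ?grid_adjE /= ?eqxx; lia.
- exists (i, Ordinal (leq_ltn_trans (leq_pred j) (ltn_ord j)));
    rewrite ?grid_adjE /= ?eqxx; lia.
Qed.

Lemma exists_succ_nbr (v : 'I_m * 'I_n) : (v.1.+1 < m) || (v.2.+1 < n) ->
  exists2 u, grid_adj v u & diag_sum u = (diag_sum v).+1.
Proof.
case: v => i j /= /orP[lt_i|lt_j].
- exists (Ordinal lt_i, j); rewrite ?grid_adjE /diag_sum /= ?eqxx; lia.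
- exists (i, Ordinal lt_j); rewrite ?grid_adjE /diag_sum /= ?eqxx; lia.
Qed.

(* The corner (m-1, n-1) has sum m + n - 2, which must not be c + 2 mod 3. *)
Definition grid_offset : nat := if (m + n - 1) %% 3 == 0 then 1 else 0.

Lemma diag_class_dominating :
  dominating (@grid_adj m n) (diag_class grid_offset).
Proof.
have offset_lt2 : grid_offset < 2 by rewrite /grid_offset; case: ifP.
have offset_ne : (m + n - 1) %% 3 <> grid_offset.
  by rewrite /grid_offset; case: eqP => [->|].
move=> [i j]; rewrite inE => /eqP notS.
have [sum_pred|sum_succ] : diag_sum (i, j) %% 3 = (grid_offset + 1) %% 3
                        \/ diag_sum (i, j) %% 3 = (grid_offset + 2) %% 3 by lia.
- have [|u adj_vu Su] := @exists_pred_nbr (i, j).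
    by move: sum_pred; rewrite /diag_sum /=; lia.
  by exists u; rewrite // inE; apply/eqP; lia.
- have [|u adj_vu Su] := @exists_succ_nbr (i, j).
    by move: sum_succ (ltn_ord i) (ltn_ord j); rewrite /diag_sum /=; lia.
  by exists u; rewrite // inE; apply/eqP; lia.
Qed.

End DiagonalClasses.

Theorem mainTheorem2 (m n : nat) (hm : 2 <= m) (hn : 2 <= n) :
  exists S : {set 'I_m * 'I_n}, independent_12_set (@grid_adj m n) S.
Proof.
exists (diag_class m n (grid_offset m n)); split.
- exact: diag_class_independent.
- exact: diag_class_dominating.
- move=> v notS; rewrite card_nbrs_diag_class_le2 andbT card_gt0.
  have [u Su adj_vu] := diag_class_dominating notS.
  by apply/set0Pn; exists u; rewrite inE Su.
Qed.
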